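(* Let $\Pi$ be a $2$-dimensional toral sub-manifold confined to a plane, parametrised as $\Pi=\{u\xi+v\eta:(u,v)\in[0,A]\times[0,B]\}$. Then $$\iint_{\Pi^2}\left(r^2+\frac{D\Omega D^T}{m}+\frac{\mathrm{tr}(H\Omega H\Omega)}{m^2}\right)dp\,dp'\ll_\Pi\frac1N+\frac{\mathcal{G}}{N^2},$$ where $$\mathcal{G}=\sum_{\substack{\lambda,\lambda'\in\Lambda_m\\ \lambda\neq\lambda'}}\left|\int_0^A\int_0^B e^{2\pi i\langle\lambda-\lambda',u\xi+v\eta\rangle}du\,dv\right|^2.$$
   Context: For a positive integer $m$ let $\Lambda=\Lambda_m=\{\lambda\in\mathbb{Z}^3:\|\lambda\|^2=m\}$ and $N=|\Lambda_m|$; $m$ ranges over integers with $m\not\equiv 0,4,7\pmod 8$ and bounds refer to $m\to\infty$. Let $\vec n=(n_1,n_2,n_3)$ be the unit normal to the plane containing $\Pi\subset\mathbb{T}^3=\mathbb{R}^3/\mathbb{Z}^3$, $\{\vec n,\xi,\eta\}$ an orthonormal basis of $\mathbb{R}^3$, and $\Pi$ parametrised by $\gamma:[0,A]\times[0,B]\to\Pi$, $(u,v)\mapsto u\xi+v\eta$, where $A=\max\{u:u\xi+v\eta\in\Pi\}$, $B=\max\{v:u\xi+v\eta\in\Pi\}$. For $p=u\xi+v\eta$, $p'=u'\xi+v'\eta$: $r(p,p')=\frac1N\sum_{\lambda\in\Lambda}e^{2\pi i\langle\lambda,(u'-u)\xi+(v'-v)\eta\rangle}$; $D(p,p')=\frac{2\pi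 i}{N}\sum_{\lambda}e^{2\pi i\langle\lambda,(u'-u)\xi+(v'-v)\eta\rangle}\lambda$ (row vector); $H(p,p')=-\frac{4\pi^2}{N}\sum_{\lambda}e^{2\pi i\langle\lambda,(u'-u)\xi+(v'-v)\eta\rangle}\lambda^T\lambda$; $\Omega=\begin{pmatrix}n_2^2+n_3^2&-n_1n_2&-n_1n_3\\-n_1n_2&n_1^2+n_3^2&-n_2n_3\\-n_1n_3&-n_2n_3&n_1^2+n_2^2\end{pmatrix}$. Integration over $\Pi^2$ is with respect to surface area measure. *)

From Stdlib Require Import Reals ZArith List.
From Coquelicot Require Import Coquelicot.
Import ListNotations.
Open Scope R_scope.

Definition vec3 : Type := (R * R * R)%type.
Definition zvec3 : Type := (Z * Z * Z)%type.

Definition comp3 (v : vec3) (i : nat) : R :=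
  match i with 0%nat => fst (fst v) | 1%nat => snd (fst v) | _ => snd v end.

Definition dot3 (x y : vec3) : R :=
  comp3 x 0 * comp3 y 0 + comp3 x 1 * comp3 y 1 + comp3 x 2 * comp3 y 2.

Definition vadd3 (x y : vec3) : vec3 :=
  (comp3 x 0 + comp3 y 0, comp3 x 1 + comp3 y 1, comp3 x 2 + comp3 y 2).
Definition vscale3 (a : R) (x : vec3) : vec3 :=
  (a * comp3 x 0, a * comp3 x 1, a * comp3 x 2).

Definition zvecR (l : zvec3) : vec3 :=
  (IZR (fst (fst l)), IZR (snd (fst l)), IZR (snd l)).

Definition zsub3 (l l' : zvec3) : zvec3 :=
  ((fst (fst l) - fst (fst l'))%Z, (snd (fst l) - snd (fst l'))%Z, (snd l - snd l')%Z).

Definition orthonormal3 (n xi eta : vec3) : Prop :=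
  dot3 n n = 1 /\ dot3 xi xi = 1 /\ dot3 eta eta = 1 /\
  dot3 n xi = 0 /\ dot3 n eta = 0 /\ dot3 xi eta = 0.

(* Lambda_m = { lambda in Z^3 : |lambda|^2 = m } as an explicit duplicate-free list
   (all coordinates satisfy |a| <= m). *)
Definition zbox (m : nat) : list Z :=
  map (fun k => (Z.of_nat k - Z.of_nat m)%Z) (seq 0 (2 * m + 1)).

Definition Lambda (m : nat) : list zvec3 :=
  filter (fun l : zvec3 =>
            Z.eqb (fst (fst l) * fst (fst l) + snd (fst l) * snd (fst l) + snd l * snd l)%Z
                  (Z.of_nat m))
         (list_prod (list_prod (zbox m) (zbox m)) (zbox m)).

Definition NN (m : nat) : nat := length (Lambda m).

Definition admissible (m : nat) : Prop :=
  (0 < m)%nat /\ (m mod 8 <> 0)%nat /\ (m mod 8 <> 4)%nat /\ (m mod 8 <> 7)%nat.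

Definition expi (t : R) : C := (cos t, sin t).

Definition csum {T : Type} (s : list T) (f : T -> C) : C :=
  fold_right (fun x acc => Cplus (f x) acc) (RtoC 0) s.

Definition sum3 (f : nat -> C) : C := Cplus (f 0%nat) (Cplus (f 1%nat) (f 2%nat)).

Definition ephase (l : zvec3) (x : vec3) : C := expi (2 * PI * dot3 (zvecR l) x).

(* r, D, H evaluated at the difference vector x = (u'-u) xi + (v'-v) eta *)
Definition rr (m : nat) (x : vec3) : C :=
  Cmult (RtoC (1 / INR (NN m))) (csum (Lambda m) (fun l => ephase l x)).

Definition DD (m : nat) (x : vec3) (i : nat) : C :=
  Cmult ((0, 2 * PI / INR (NN m)) : C)
        (csum (Lambda m) (fun l => Cmult (ephase l x) (RtoC (comp3 (zvecR l) i)))).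

Definition HH (m : nat) (x : vec3) (i j : nat) : C :=
  Cmult (RtoC (- (4 * PI ^ 2) / INR (NN m)))
        (csum (Lambda m) (fun l =>
           Cmult (ephase l x) (RtoC (comp3 (zvecR l) i * comp3 (zvecR l) j)))).

Definition Omega (n : vec3) (i j : nat) : R :=
  if Nat.eqb i j then (dot3 n n - comp3 n i ^ 2) else - (comp3 n i * comp3 n j).

Definition integrand (n : vec3) (m : nat) (x : vec3) : C :=
  Cplus (Cmult (rr m x) (rr m x))
   (Cplus
     (Cmult (RtoC (1 / INR m))
        (sum3 (fun i => sum3 (fun j =>
           Cmult (DD m x i) (Cmult (RtoC (Omega n i j)) (DD m x j))))))
     (Cmult (RtoC (1 / INR m ^ 2))
        (sum3 (fun i => sum3 (fun j => sum3 (fun k => sum3 (fun l =>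
           Cmult (HH m x i j) (Cmult (RtoC (Omega n j k))
             (Cmult (HH m x k l) (RtoC (Omega n l i))))))))))).

(* iint over Pi^2 w.r.t. surface measure: p = u xi + v eta, p' = u' xi + v' eta,
   surface measure = du dv since xi, eta orthonormal *)
Definition IntPi2 (n xi eta : vec3) (A B : R) (m : nat) : C :=
  RInt (V := C_R_CompleteNormedModule) (fun v => RInt (V := C_R_CompleteNormedModule) (fun u => RInt (V := C_R_CompleteNormedModule) (fun v' => RInt (V := C_R_CompleteNormedModule) (fun u' =>
     integrand n m (vadd3 (vscale3 (u' - u) xi) (vscale3 (v' - v) eta)))
   0 A) 0 B) 0 A) 0 B.

Definition zvec3_eqb (l l' : zvec3) : bool :=
  (Z.eqb (fst (fst l)) (fst (fst l')) && Z.eqb (snd (fst l)) (snd (fst l')) && Z.eqb (snd l) (snd l'))%bool.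

Definition GG (xi eta : vec3) (A B : R) (m : nat) : R :=
  fold_right Rplus 0
    (map (fun pr : zvec3 * zvec3 =>
            if zvec3_eqb (fst pr) (snd pr) then 0
            else Cmod (RInt (V := C_R_CompleteNormedModule) (fun v => RInt (V := C_R_CompleteNormedModule) (fun u =>
                   ephase (zsub3 (fst pr) (snd pr)) (vadd3 (vscale3 u xi) (vscale3 v eta)))
                   0 A) 0 B) ^ 2)
         (list_prod (Lambda m) (Lambda m))).

(* Write e(λ,x) = e^{2πi⟨λ,x⟩}.  Expanding the products (no conjugates occur), the
   integrand at x is a double sum over (λ, λ') ∈ Λ² of e(λ,x) e(λ',x) with the real
   coefficient
     c(λ,λ') = (1 - 4π² B/m + 16π⁴ (B/m)²) / N²,   B = λ Ω λ'ᵀ,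
   the trace term collapsing to B² because Ω is symmetric.  As |λ_i|² ≤ m and
   |Ω_ij| ≤ 1 we get |B| ≤ 9m, hence |c| ≤ C0 / N².  With x = (u'-u)ξ + (v'-v)η
   the integral over Π² of e(λ,x) e(λ',x) factors into four one-dimensional
   integrals of total modulus |∫∫ e^{2πi⟨λ+λ', uξ+vη⟩} du dv|².  Since Λ = -Λ we
   may replace λ' by -λ': the off-diagonal pairs then give exactly G and each of
   the N diagonal pairs gives (AB)². *)

From Stdlib Require Import Reals Lra Lia List Permutation Morphisms Setoid.
From Coquelicot Require Import Coquelicot.
Open Scope R_scope.

Notation CV := C_R_CompleteNormedModule.

Lemma is_RInt_C (f : R -> C) (a b : R) (l : C) :
  is_RInt (V := CV) f a b l <->
  is_RInt (fun t => fst (f t)) a b (fst l) /\ is_RInt (fun t => snd (f t)) a b (snd l).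
Proof.
  split.
  - intros H; split.
    + exact (is_RInt_fct_extend_fst (U := R_NormedModule) (V := R_NormedModule) f a b l H).
    + exact (is_RInt_fct_extend_snd (U := R_NormedModule) (V := R_NormedModule) f a b l H).
  - intros [H1 H2]; destruct l as [l1 l2].
    exact (is_RInt_fct_extend_pair (U := R_NormedModule) (V := R_NormedModule)
             f a b l1 l2 H1 H2).
Qed.

Lemma is_RInt_const_R (c a b : R) : is_RInt (fun _ => c) a b ((b - a) * c).
Proof. exact (is_RInt_const (V := R_NormedModule) a b c). Qed.

(* [C] is only an [R]-module here, so complex scalars are handled componentwise. *)
Lemma is_RInt_Cmult_l (k : C) (f : R -> C) (a b : R) (l : C) :
  is_RInt (V := CV) f a b l -> is_RInt (V := CV) (fun t => (k * f t)%C) a b (k * l)%C.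
Proof.
  intros H; apply is_RInt_C in H as [H1 H2]; apply is_RInt_C.
  destruct k as [k1 k2], l as [l1 l2]; simpl in *; split.
  - apply (is_RInt_minus (V := R_NormedModule)
             (fun t => scal k1 (fst (f t))) (fun t => scal k2 (snd (f t))));
      apply (is_RInt_scal (V := R_NormedModule)); assumption.
  - apply (is_RInt_plus (V := R_NormedModule)
             (fun t => scal k1 (snd (f t))) (fun t => scal k2 (fst (f t))));
      apply (is_RInt_scal (V := R_NormedModule)); assumption.
Qed.

Lemma ex_RInt_Cmult_l (k : C) (f : R -> C) (a b : R) :
  ex_RInt (V := CV) f a b -> ex_RInt (V := CV) (fun t => (k * f t)%C) a b.
Proof. intros [l H]; exists (k * l)%C; apply is_RInt_Cmult_l, H. Qed.

Lemma RInt_Cmult_l (k : C) (f : R -> C) (a b : R) :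
  ex_RInt (V := CV) f a b ->
  RInt (V := CV) (fun t => (k * f t)%C) a b = (k * RInt (V := CV) f a b)%C.
Proof. intros H; apply is_RInt_unique, is_RInt_Cmult_l, RInt_correct, H. Qed.

Lemma expi_plus (x y : R) : (expi x * expi y)%C = expi (x + y).
Proof. unfold expi; rewrite cos_plus, sin_plus; apply injective_projections; simpl; ring. Qed.

Lemma ex_RInt_expi (g a b : R) : ex_RInt (V := CV) (fun t => expi (g * t)) a b.
Proof.
  assert (Hcos : ex_RInt (fun t => cos (g * t)) a b).
  { apply (ex_RInt_continuous (V := R_CompleteNormedModule)); intros z _.
    apply (ex_derive_continuous (K := R_AbsRing) (V := R_NormedModule)); auto_derive; auto. }
  assert (Hsin : ex_RInt (fun t => sin (g * t)) a b).
  { apply (ex_RInt_continuous (V := R_CompleteNormedModule)); intros z _.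
    apply (ex_derive_continuous (K := R_AbsRing) (V := R_NormedModule)); auto_derive; auto. }
  destruct Hcos as [l1 H1], Hsin as [l2 H2].
  exists (l1, l2); apply is_RInt_C; split; assumption.
Qed.

Definition expi_int (g L : R) : C := RInt (V := CV) (fun t => expi (g * t)) 0 L.

Lemma expi_int_0 (L : R) : expi_int 0 L = RtoC L.
Proof.
  unfold expi_int; apply (is_RInt_unique (V := CV)), is_RInt_C; simpl; split.
  - apply (is_RInt_ext (fun _ => 1)).
    { intros; rewrite Rmult_0_l, cos_0; reflexivity. }
    pose proof (is_RInt_const_R 1 0 L) as Hc; rewrite Rminus_0_r, Rmult_1_r in Hc; exact Hc.
  - apply (is_RInt_ext (fun _ => 0)).
    { intros; rewrite Rmult_0_l, sin_0; reflexivity. }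
    pose proof (is_RInt_const_R 0 0 L) as Hc; rewrite Rmult_0_r in Hc; exact Hc.
Qed.

Lemma Cmod_expi_int_opp (g L : R) : Cmod (expi_int (- g) L) = Cmod (expi_int g L).
Proof.
  unfold expi_int; destruct (ex_RInt_expi g 0 L) as [l H].
  assert (Hconj : is_RInt (V := CV) (fun t => expi (- g * t)) 0 L (fst l, - snd l)).
  { apply is_RInt_C in H as [H1 H2]; apply is_RInt_C; simpl; split.
    - apply (is_RInt_ext (fun t => fst (expi (g * t)))); [|exact H1].
      intros t _; unfold expi; simpl; rewrite <- cos_neg; f_equal; ring.
    - apply (is_RInt_ext (fun t => opp (snd (expi (g * t))))).
      + intros t _; unfold expi, opp; simpl; rewrite <- sin_neg; f_equal; ring.
      + apply (is_RInt_opp (V := R_NormedModule)), H2. }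
  rewrite (is_RInt_unique _ _ _ _ Hconj), (is_RInt_unique _ _ _ _ H).
  destruct l; unfold Cmod; simpl; f_equal; ring.
Qed.

Definition rsum {T : Type} (s : list T) (f : T -> R) : R := fold_right Rplus 0 (map f s).

Section FiniteSums.
Context {T : Type}.

Lemma csum_ext (s : list T) (f g : T -> C) : (forall x, f x = g x) -> csum s f = csum s g.
Proof. intros H; induction s; simpl; [reflexivity | rewrite H, IHs; reflexivity]. Qed.

Lemma csum_plus (s : list T) (f g : T -> C) :
  csum s (fun x => f x + g x)%C = (csum s f + csum s g)%C.
Proof. induction s; simpl; [ring | rewrite IHs; ring]. Qed.

Lemma csum_Cmult_l (s : list T) (k : C) (f : T -> C) :
  csum s (fun x => k * f x)%C = (k * csum s f)%C.
Proof. induction s; simpl; [ring | rewrite IHs; ring]. Qed.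

Lemma csum_Cmult_r (s : list T) (k : C) (f : T -> C) :
  csum s (fun x => f x * k)%C = (csum s f * k)%C.
Proof. induction s; simpl; [ring | rewrite IHs; ring]. Qed.

Lemma csum_app (s t : list T) (f : T -> C) : csum (s ++ t) f = (csum s f + csum t f)%C.
Proof. induction s; simpl; [ring | rewrite IHs; ring]. Qed.

Lemma csum_map {U : Type} (s : list U) (g : U -> T) (f : T -> C) :
  csum (map g s) f = csum s (fun x => f (g x)).
Proof. induction s; simpl; [reflexivity | rewrite IHs; reflexivity]. Qed.

Lemma Cmod_csum (s : list T) (f : T -> C) : Cmod (csum s f) <= rsum s (fun x => Cmod (f x)).
Proof.
  unfold rsum; induction s; simpl; [rewrite Cmod_0; lra |].
  eapply Rle_trans; [apply Cmod_triangle | lra].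
Qed.

Lemma is_RInt_csum (s : list T) (G : T -> R -> C) (a b : R) :
  (forall x, ex_RInt (V := CV) (G x) a b) ->
  is_RInt (V := CV) (fun t => csum s (fun x => G x t)) a b
    (csum s (fun x => RInt (V := CV) (G x) a b)).
Proof.
  intros HG; induction s as [|x s IH]; simpl.
  - apply is_RInt_C; simpl; pose proof (is_RInt_const_R 0 a b) as H0.
    rewrite Rmult_0_r in H0; split; exact H0.
  - apply (is_RInt_plus (V := CV) (G x)); [apply RInt_correct, HG | exact IH].
Qed.

Lemma rsum_ext (s : list T) (f g : T -> R) :
  (forall x, In x s -> f x = g x) -> rsum s f = rsum s g.
Proof.
  unfold rsum; induction s as [|a s IH]; simpl; intros H; [reflexivity|].
  rewrite H, IH by auto; reflexivity.
Qed.

Lemma rsum_le (s : list T) (f g : T -> R) :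
  (forall x, In x s -> f x <= g x) -> rsum s f <= rsum s g.
Proof.
  unfold rsum; induction s as [|a s IH]; simpl; intros H; [lra|].
  apply Rplus_le_compat; auto.
Qed.

Lemma rsum_nonneg (s : list T) (f : T -> R) : (forall x, In x s -> 0 <= f x) -> 0 <= rsum s f.
Proof.
  intros H; apply Rle_trans with (rsum s (fun _ => 0)); [| apply rsum_le, H].
  clear H; unfold rsum; induction s; simpl; lra.
Qed.

Lemma rsum_plus (s : list T) (f g : T -> R) : rsum s (fun x => f x + g x) = rsum s f + rsum s g.
Proof. unfold rsum; induction s; simpl; [ring | rewrite IHs; ring]. Qed.

Lemma rsum_Rmult_l (s : list T) (k : R) (f : T -> R) : rsum s (fun x => k * f x) = k * rsum s f.
Proof. unfold rsum; induction s; simpl; [ring | rewrite IHs; ring]. Qed.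

Lemma rsum_const_1 (s : list T) : rsum s (fun _ => 1) = INR (length s).
Proof.
  unfold rsum; induction s; [reflexivity|].
  cbn [map fold_right length]; rewrite IHs, S_INR; ring.
Qed.

Lemma rsum_Permutation (s t : list T) (f : T -> R) : Permutation s t -> rsum s f = rsum t f.
Proof. unfold rsum; intros H; induction H; simpl; lra. Qed.

Lemma rsum_app (s t : list T) (f : T -> R) : rsum (s ++ t) f = rsum s f + rsum t f.
Proof. unfold rsum; induction s; simpl; [ring | rewrite IHs; ring]. Qed.

Lemma rsum_map {U : Type} (s : list U) (g : U -> T) (f : T -> R) :
  rsum (map g s) f = rsum s (fun x => f (g x)).
Proof. unfold rsum; rewrite map_map; reflexivity. Qed.

End FiniteSums.

Lemma csum_list_prod {U V : Type} (s : list U) (t : list V) (f : U -> C) (g : V -> C) :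
  csum (list_prod s t) (fun p => f (fst p) * g (snd p))%C = (csum s f * csum t g)%C.
Proof.
  induction s as [|x s IH]; simpl; [ring|].
  rewrite csum_app, IH, csum_map; simpl; rewrite csum_Cmult_l; ring.
Qed.

Lemma rsum_list_prod {U V : Type} (s : list U) (t : list V) (h : U * V -> R) :
  rsum (list_prod s t) h = rsum s (fun x => rsum t (fun y => h (x, y))).
Proof.
  induction s as [|x s IH]; [reflexivity|].
  simpl list_prod; rewrite rsum_app, IH, rsum_map; reflexivity.
Qed.

#[local] Instance sum3_Proper : Proper (pointwise_relation nat eq ==> eq) sum3.
Proof. intros f g H; unfold sum3; rewrite !H; reflexivity. Qed.

#[local] Instance RInt_Proper :
  Proper (pointwise_relation R eq ==> eq ==> eq ==> eq) (RInt (V := CV)).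
Proof. intros f g H a a' <- b b' <-; apply RInt_ext; intros; apply H. Qed.

Lemma sum3_csum {T : Type} (s : list T) (F : nat -> T -> C) :
  sum3 (fun i => csum s (F i)) = csum s (fun x => sum3 (fun i => F i x)).
Proof. unfold sum3; rewrite !csum_plus; reflexivity. Qed.

Section ExponentialSums.
Context {T : Type} (s : list T).

Lemma RInt_csum_expi (K : T -> C) (g : T -> R) (L : R) :
  RInt (V := CV) (fun t => csum s (fun p => K p * expi (g p * t)))%C 0 L
  = csum s (fun p => K p * expi_int (g p) L)%C.
Proof.
  apply is_RInt_unique.
  rewrite (csum_ext s _ (fun p => RInt (V := CV) (fun t => K p * expi (g p * t))%C 0 L)).
  - apply is_RInt_csum; intros p; apply ex_RInt_Cmult_l, ex_RInt_expi.
  - intros p; rewrite RInt_Cmult_l by apply ex_RInt_expi; reflexivity.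
Qed.

Lemma RInt_csum_expi_affine (K : T -> C) (g h : T -> R) (L : R) :
  RInt (V := CV) (fun t => csum s (fun p => K p * expi (g p * t + h p)))%C 0 L
  = csum s (fun p => K p * expi_int (g p) L * expi (h p))%C.
Proof.
  transitivity
    (RInt (V := CV) (fun t => csum s (fun p => (K p * expi (h p)) * expi (g p * t)))%C 0 L).
  - apply RInt_ext; intros t _; apply csum_ext; intros p.
    rewrite <- Cmult_assoc, expi_plus, Rplus_comm; reflexivity.
  - rewrite RInt_csum_expi; apply csum_ext; intros p; ring.
Qed.

Lemma RInt4_csum_expi (c : T -> C) (a b : T -> R) (A B : R) :
  RInt (V := CV) (fun v => RInt (V := CV) (fun u =>
    RInt (V := CV) (fun v' => RInt (V := CV) (fun u' =>
      csum s (fun p => c p * expi (a p * (u' - u) + b p * (v' - v)))%C) 0 A) 0 B) 0 A) 0 B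
  = csum s (fun p => c p * expi_int (a p) A * expi_int (b p) B
                        * expi_int (- a p) A * expi_int (- b p) B)%C.
Proof.
  assert (Hu' : forall u v v',
    RInt (V := CV) (fun u' => csum s (fun p => c p * expi (a p * (u' - u) + b p * (v' - v)))%C) 0 A
    = csum s (fun p => c p * expi_int (a p) A * expi (b p * v' + (- a p * u + - b p * v)))%C).
  { intros u v v'.
    rewrite <- (RInt_csum_expi_affine c a (fun p => b p * v' + (- a p * u + - b p * v))).
    apply RInt_ext; intros u' _; apply csum_ext; intros p; do 2 f_equal; ring. }
  assert (Hv' : forall u v,
    RInt (V := CV) (fun v' => RInt (V := CV) (fun u' =>
      csum s (fun p => c p * expi (a p * (u' - u) + b p * (v' - v)))%C) 0 A) 0 B
    = csum s (fun p => c p * expi_int (a p) A * expi_int (b p) B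
                         * expi (- a p * u + - b p * v))%C).
  { intros u v; rewrite (RInt_ext _ _ _ _ (fun v' _ => Hu' u v v')).
    apply (RInt_csum_expi_affine (fun p => c p * expi_int (a p) A)%C). }
  assert (Hu : forall v,
    RInt (V := CV) (fun u => RInt (V := CV) (fun v' => RInt (V := CV) (fun u' =>
      csum s (fun p => c p * expi (a p * (u' - u) + b p * (v' - v)))%C) 0 A) 0 B) 0 A
    = csum s (fun p => c p * expi_int (a p) A * expi_int (b p) B * expi_int (- a p) A
                         * expi (- b p * v))%C).
  { intros v; rewrite (RInt_ext _ _ _ _ (fun u _ => Hv' u v)).
    apply (RInt_csum_expi_affine (fun p => c p * expi_int (a p) A * expi_int (b p) B)%C). }
  rewrite (RInt_ext _ _ _ _ (fun v _ => Hu v)).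
  apply (RInt_csum_expi
           (fun p => c p * expi_int (a p) A * expi_int (b p) B * expi_int (- a p) A)%C).
Qed.

End ExponentialSums.

Definition sum3R (f : nat -> R) : R := f 0%nat + (f 1%nat + f 2%nat).

Definition bilin3 (W : nat -> nat -> R) (a b : nat -> R) : R :=
  sum3R (fun i => sum3R (fun j => a i * W i j * b j)).

Lemma bilin3_comm (W : nat -> nat -> R) (a b : nat -> R) :
  (forall i j, W i j = W j i) -> bilin3 W b a = bilin3 W a b.
Proof.
  intros HW; unfold bilin3, sum3R.
  rewrite (HW 1%nat 0%nat), (HW 2%nat 0%nat), (HW 2%nat 1%nat); ring.
Qed.

Lemma Omega_sym (n : vec3) (i j : nat) : Omega n i j = Omega n j i.
Proof.
  unfold Omega; rewrite Nat.eqb_sym.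
  destruct (Nat.eqb j i) eqn:E; [apply Nat.eqb_eq in E; subst; reflexivity | ring].
Qed.

Lemma csum_bilinear {U V : Type} (s : list U) (t : list V) (k w : C) (f : U -> C) (g : V -> C) :
  (k * csum s f * (w * (k * csum t g)))%C
  = csum (list_prod s t) (fun p => k * f (fst p) * (w * (k * g (snd p))))%C.
Proof.
  rewrite (csum_list_prod s t (fun x => k * f x)%C (fun y => w * (k * g y))%C), !csum_Cmult_l.
  reflexivity.
Qed.

Lemma csum_bilinear_r {U V : Type} (s : list U) (t : list V) (k w z : C) (f : U -> C) (g : V -> C) :
  (k * csum s f * (w * (k * csum t g * z)))%C
  = csum (list_prod s t) (fun p => k * f (fst p) * (w * (k * g (snd p) * z)))%C.
Proof.
  rewrite (csum_list_prod s t (fun x => k * f x)%C (fun y => w * (k * g y * z))%C).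
  rewrite !csum_Cmult_l, csum_Cmult_r, csum_Cmult_l; reflexivity.
Qed.

Lemma sum3_DWD (k : R) (W : nat -> nat -> R) (a b : nat -> R) (e e' : C) :
  sum3 (fun i => sum3 (fun j =>
    ((0, k) * (e * RtoC (a i))) * (RtoC (W i j) * ((0, k) * (e' * RtoC (b j))))))%C
  = (e * e' * RtoC (- k ^ 2 * bilin3 W a b))%C.
Proof.
  destruct e, e'; unfold sum3, bilin3, sum3R; apply injective_projections; simpl; ring.
Qed.

Lemma sum3_HWHW (h : R) (W : nat -> nat -> R) (a b : nat -> R) (e e' : C) :
  sum3 (fun i => sum3 (fun j => sum3 (fun k => sum3 (fun q =>
    (RtoC h * (e * RtoC (a i * a j)))
    * (RtoC (W j k) * ((RtoC h * (e' * RtoC (b k * b q))) * RtoC (W q i)))))))%C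
  = (e * e' * RtoC (h ^ 2 * (bilin3 W a b * bilin3 W b a)))%C.
Proof.
  destruct e, e'; unfold sum3, bilin3, sum3R; apply injective_projections; simpl; ring.
Qed.

Definition pairs (m : nat) : list (zvec3 * zvec3) := list_prod (Lambda m) (Lambda m).

Definition zcomp (l : zvec3) : nat -> R := comp3 (zvecR l).

Definition ephase2 (p : zvec3 * zvec3) (x : vec3) : C := (ephase (fst p) x * ephase (snd p) x)%C.

Definition omega_form (n : vec3) (p : zvec3 * zvec3) : R :=
  bilin3 (Omega n) (zcomp (fst p)) (zcomp (snd p)).

Section Expansion.
Variables (n : vec3) (m : nat) (x : vec3).

Lemma rr_mult_rr :
  (rr m x * rr m x)%C = csum (pairs m) (fun p => ephase2 p x * RtoC ((1 / INR (NN m)) ^ 2))%C.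
Proof.
  unfold rr; rewrite <- csum_Cmult_l, <- csum_list_prod; apply csum_ext; intros p.
  unfold ephase2; destruct (ephase (fst p) x), (ephase (snd p) x).
  apply injective_projections; simpl; ring.
Qed.

Lemma DD_Omega_DD :
  sum3 (fun i => sum3 (fun j => DD m x i * (RtoC (Omega n i j) * DD m x j)))%C
  = csum (pairs m) (fun p => ephase2 p x * RtoC (- (2 * PI / INR (NN m)) ^ 2 * omega_form n p))%C.
Proof.
  unfold DD; setoid_rewrite csum_bilinear.
  setoid_rewrite sum3_csum; rewrite sum3_csum; apply csum_ext; intros p.
  apply sum3_DWD.
Qed.

Lemma HH_Omega_HH_Omega :
  sum3 (fun i => sum3 (fun j => sum3 (fun k => sum3 (fun q =>
    HH m x i j * (RtoC (Omega n j k) * (HH m x k q * RtoC (Omega n q i)))))))%C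
  = csum (pairs m) (fun p =>
      ephase2 p x * RtoC ((- (4 * PI ^ 2) / INR (NN m)) ^ 2 * omega_form n p ^ 2))%C.
Proof.
  unfold HH; setoid_rewrite csum_bilinear_r.
  do 3 setoid_rewrite sum3_csum; rewrite sum3_csum; apply csum_ext; intros p.
  rewrite sum3_HWHW; unfold omega_form.
  rewrite (bilin3_comm (Omega n) (comp3 (zvecR (fst p))) (comp3 (zvecR (snd p))) (Omega_sym n)).
  unfold ephase2, zcomp; f_equal; apply f_equal; ring.
Qed.

End Expansion.

Definition pair_coef (n : vec3) (m : nat) (p : zvec3 * zvec3) : R :=
  (1 - 4 * PI ^ 2 * (omega_form n p / INR m) + 16 * PI ^ 4 * (omega_form n p / INR m) ^ 2)
  / INR (NN m) ^ 2.

Lemma integrand_csum (n : vec3) (m : nat) (x : vec3) :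
  integrand n m x = csum (pairs m) (fun p => ephase2 p x * RtoC (pair_coef n m p))%C.
Proof.
  unfold integrand; rewrite rr_mult_rr, DD_Omega_DD, HH_Omega_HH_Omega.
  rewrite <- !csum_Cmult_l, <- !csum_plus; apply csum_ext; intros p.
  transitivity (ephase2 p x * RtoC ((1 / INR (NN m)) ^ 2
    + 1 / INR m * (- (2 * PI / INR (NN m)) ^ 2 * omega_form n p)
    + 1 / INR m ^ 2 * ((- (4 * PI ^ 2) / INR (NN m)) ^ 2 * omega_form n p ^ 2)))%C.
  - rewrite !RtoC_plus, !RtoC_mult; ring.
  - f_equal; apply f_equal; unfold pair_coef, Rdiv; rewrite <- !pow_inv; ring.
Qed.

Lemma dot3_plane (l xi eta : vec3) (s t : R) :
  dot3 l (vadd3 (vscale3 s xi) (vscale3 t eta)) = s * dot3 l xi + t * dot3 l eta.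
Proof. unfold dot3, vadd3, vscale3, comp3; simpl; ring. Qed.

Definition freq (xi : vec3) (p : zvec3 * zvec3) : R :=
  2 * PI * (dot3 (zvecR (fst p)) xi + dot3 (zvecR (snd p)) xi).

Lemma integrand_plane (n xi eta : vec3) (m : nat) (s t : R) :
  integrand n m (vadd3 (vscale3 s xi) (vscale3 t eta))
  = csum (pairs m) (fun p => RtoC (pair_coef n m p) * expi (freq xi p * s + freq eta p * t))%C.
Proof.
  rewrite integrand_csum; apply csum_ext; intros p.
  unfold ephase2, ephase; rewrite expi_plus, !dot3_plane, Cmult_comm.
  do 2 f_equal; unfold freq; ring.
Qed.

Lemma IntPi2_csum (n xi eta : vec3) (A B : R) (m : nat) :
  IntPi2 n xi eta A B m
  = csum (pairs m) (fun p => RtoC (pair_coef n m p)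
      * expi_int (freq xi p) A * expi_int (freq eta p) B
      * expi_int (- freq xi p) A * expi_int (- freq eta p) B)%C.
Proof. unfold IntPi2; setoid_rewrite integrand_plane; apply RInt4_csum_expi. Qed.

Definition plane_fourier (xi eta : vec3) (A B : R) (z : zvec3) : C :=
  RInt (V := CV) (fun v => RInt (V := CV) (fun u =>
    ephase z (vadd3 (vscale3 u xi) (vscale3 v eta))) 0 A) 0 B.

Lemma plane_fourier_expi_int (xi eta : vec3) (A B : R) (z : zvec3) :
  plane_fourier xi eta A B z
  = (expi_int (2 * PI * dot3 (zvecR z) xi) A * expi_int (2 * PI * dot3 (zvecR z) eta) B)%C.
Proof.
  set (a := 2 * PI * dot3 (zvecR z) xi); set (b := 2 * PI * dot3 (zvecR z) eta).
  unfold plane_fourier.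
  rewrite (RInt_ext (V := CV) _ (fun v => expi_int a A * expi (b * v))%C).
  - apply RInt_Cmult_l, ex_RInt_expi.
  - intros v _; rewrite Cmult_comm; unfold expi_int; rewrite <- RInt_Cmult_l by apply ex_RInt_expi.
    apply RInt_ext; intros u _; unfold ephase; rewrite dot3_plane, expi_plus.
    f_equal; unfold a, b; ring.
Qed.

Definition zneg (l : zvec3) : zvec3 := ((- fst (fst l))%Z, (- snd (fst l))%Z, (- snd l)%Z).

Lemma dot3_zsub3 (l l' : zvec3) (xi : vec3) :
  dot3 (zvecR (zsub3 l l')) xi = dot3 (zvecR l) xi - dot3 (zvecR l') xi.
Proof.
  destruct l as [[a b] c], l' as [[a' b'] c'].
  unfold dot3, zsub3, zvecR, comp3; simpl; rewrite !minus_IZR; ring.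
Qed.

Lemma dot3_zneg (l : zvec3) (xi : vec3) : dot3 (zvecR (zneg l)) xi = - dot3 (zvecR l) xi.
Proof. destruct l as [[a b] c]; unfold dot3, zneg, zvecR, comp3; simpl; rewrite !opp_IZR; ring. Qed.

Lemma Cmod_expi_int_prod (xi eta : vec3) (A B : R) (p : zvec3 * zvec3) :
  Cmod (expi_int (freq xi p) A) * (Cmod (expi_int (freq eta p) B)
    * (Cmod (expi_int (- freq xi p) A) * Cmod (expi_int (- freq eta p) B)))
  = Cmod (plane_fourier xi eta A B (zsub3 (fst p) (zneg (snd p)))) ^ 2.
Proof.
  rewrite plane_fourier_expi_int, !dot3_zsub3, !dot3_zneg, Cmod_mult, !Cmod_expi_int_opp.
  unfold freq, Rminus; rewrite !Ropp_involutive; ring.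
Qed.

Lemma NoDup_list_prod {U V : Type} (s : list U) (t : list V) :
  NoDup s -> NoDup t -> NoDup (list_prod s t).
Proof.
  intros Hs Ht; induction Hs as [|a s Ha Hs IH]; simpl; [constructor|].
  apply NoDup_app; [| exact IH |].
  - apply FinFun.Injective_map_NoDup; [intros y y' E; injection E; auto | exact Ht].
  - intros [x y] H1 H2; apply in_map_iff in H1 as [z [E _]]; injection E as <- _.
    apply in_prod_iff in H2; tauto.
Qed.

Lemma In_zbox (m : nat) (z : Z) : In z (zbox m) <-> (- Z.of_nat m <= z <= Z.of_nat m)%Z.
Proof.
  unfold zbox; rewrite in_map_iff; split.
  - intros [k [<- Hk]]; apply in_seq in Hk; lia.
  - intros H; exists (Z.to_nat (z + Z.of_nat m)); rewrite in_seq; lia.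
Qed.

Lemma NoDup_zbox (m : nat) : NoDup (zbox m).
Proof. apply FinFun.Injective_map_NoDup; [intros x y E; lia | apply seq_NoDup]. Qed.

Lemma NoDup_Lambda (m : nat) : NoDup (Lambda m).
Proof. apply NoDup_filter, NoDup_list_prod; [apply NoDup_list_prod|]; apply NoDup_zbox. Qed.

Lemma In_Lambda (m : nat) (a b c : Z) :
  In (a, b, c) (Lambda m) <->
  (- Z.of_nat m <= a <= Z.of_nat m)%Z /\ (- Z.of_nat m <= b <= Z.of_nat m)%Z /\
  (- Z.of_nat m <= c <= Z.of_nat m)%Z /\ (a * a + b * b + c * c)%Z = Z.of_nat m.
Proof. unfold Lambda; rewrite filter_In, Z.eqb_eq, !in_prod_iff, !In_zbox; simpl; tauto. Qed.

Lemma Lambda_zneg (m : nat) : Permutation (map zneg (Lambda m)) (Lambda m).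
Proof.
  assert (Hneg : forall l, In l (Lambda m) -> In (zneg l) (Lambda m)).
  { intros [[a b] c]; unfold zneg; simpl; rewrite !In_Lambda; nia. }
  apply NoDup_Permutation; [| apply NoDup_Lambda |].
  - apply FinFun.Injective_map_NoDup; [| apply NoDup_Lambda].
    intros [[a b] c] [[a' b'] c'] E; unfold zneg in E; simpl in E.
    injection E; intros; f_equal; [f_equal|]; lia.
  - intros l; rewrite in_map_iff; split.
    + intros [l' [<- Hl']]; apply Hneg, Hl'.
    + intros Hl; exists (zneg l); split; [| apply Hneg, Hl].
      destruct l as [[a b] c]; unfold zneg; simpl; rewrite !Z.opp_involutive; reflexivity.
Qed.

Lemma zcomp_sq_le (m : nat) (l : zvec3) (i : nat) : In l (Lambda m) -> zcomp l i ^ 2 <= INR m.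
Proof.
  destruct l as [[a b] c]; rewrite In_Lambda; intros (_ & _ & _ & E).
  apply (f_equal IZR) in E; rewrite !plus_IZR, !mult_IZR, <- INR_IZR_INZ in E.
  unfold zcomp, zvecR; destruct i as [|[|[|i]]]; simpl comp3; nra.
Qed.

Lemma Permutation_pairs_zneg (m : nat) :
  Permutation (map (fun p => (fst p, zneg (snd p))) (pairs m)) (pairs m).
Proof.
  unfold pairs; generalize (Lambda m) at 1 3 as s; intros s.
  induction s as [|a s IH]; simpl; [constructor|].
  rewrite map_app, map_map; apply Permutation_app; [| exact IH].
  rewrite <- (map_map zneg (pair a)); apply Permutation_map, Lambda_zneg.
Qed.

Lemma zvec3_eqb_eq (l l' : zvec3) : zvec3_eqb l l' = true <-> l = l'.
Proof.
  destruct l as [[a b] c], l' as [[a' b'] c']; unfold zvec3_eqb; simpl.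
  rewrite !Bool.andb_true_iff, !Z.eqb_eq; split; [intros [[-> ->] ->]; reflexivity|].
  intros E; injection E; auto.
Qed.

Definition indicator (l l' : zvec3) : R := if zvec3_eqb l l' then 1 else 0.

Lemma rsum_indicator_notin (l : zvec3) (s : list zvec3) : ~ In l s -> rsum s (indicator l) = 0.
Proof.
  unfold rsum; induction s as [|a s IH]; simpl; intros Hl; [reflexivity|].
  unfold indicator at 1; destruct (zvec3_eqb l a) eqn:E.
  - apply zvec3_eqb_eq in E as <-; exfalso; apply Hl; left; reflexivity.
  - rewrite IH by tauto; ring.
Qed.

Lemma rsum_indicator_le (l : zvec3) (s : list zvec3) : NoDup s -> rsum s (indicator l) <= 1.
Proof.
  intros Hs; induction Hs as [|a s Ha Hs IH]; [unfold rsum; simpl; lra|].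
  change (rsum (a :: s) (indicator l)) with (indicator l a + rsum s (indicator l)).
  unfold indicator at 1; destruct (zvec3_eqb l a) eqn:E; [|lra].
  apply zvec3_eqb_eq in E as <-; rewrite (rsum_indicator_notin l s Ha); lra.
Qed.

Lemma rsum_pairs_diag_le (m : nat) :
  rsum (pairs m) (fun p => indicator (fst p) (snd p)) <= INR (NN m).
Proof.
  unfold pairs, NN; rewrite rsum_list_prod, <- rsum_const_1.
  apply rsum_le; intros l _; simpl; apply rsum_indicator_le, NoDup_Lambda.
Qed.

Lemma Rabs_Omega_le (n : vec3) (i j : nat) : dot3 n n = 1 -> Rabs (Omega n i j) <= 1.
Proof.
  intros Hn.
  assert (Hsq : forall k, comp3 n k ^ 2 <= 1).
  { unfold dot3 in Hn; intros [|[|[|k]]]; simpl in *; nra. }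
  pose proof (Hsq i); pose proof (Hsq j); pose proof (pow2_ge_0 (comp3 n i)).
  unfold Omega; apply Rabs_le; destruct (Nat.eqb i j); [rewrite Hn|]; split; nra.
Qed.

Lemma Rabs_sum3R_le (f : nat -> R) (M : R) :
  (forall i, Rabs (f i) <= M) -> Rabs (sum3R f) <= 3 * M.
Proof.
  intros Hf; unfold sum3R; pose proof (Hf 0%nat); pose proof (Hf 1%nat); pose proof (Hf 2%nat).
  pose proof (Rabs_triang (f 0%nat) (f 1%nat + f 2%nat)).
  pose proof (Rabs_triang (f 1%nat) (f 2%nat)); lra.
Qed.

Lemma Rabs_bilin3_le (W : nat -> nat -> R) (a b : nat -> R) (M : R) :
  (forall i j, Rabs (W i j) <= 1) -> (forall i, a i ^ 2 <= M) -> (forall j, b j ^ 2 <= M) ->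
  Rabs (bilin3 W a b) <= 9 * M.
Proof.
  intros HW Ha Hb; replace (9 * M) with (3 * (3 * M)) by ring.
  apply Rabs_sum3R_le; intros i; apply Rabs_sum3R_le; intros j.
  specialize (HW i j); specialize (Ha i); specialize (Hb j).
  rewrite <- (pow2_abs (a i)) in Ha; rewrite <- (pow2_abs (b j)) in Hb.
  pose proof (Rabs_pos (a i)); pose proof (Rabs_pos (b j)); pose proof (Rabs_pos (W i j)).
  assert (Hab : Rabs (a i) * Rabs (b j) <= M) by nra.
  rewrite !Rabs_mult; nra.
Qed.

(* 1 + 4π²·9 + 16π⁴·9², from |λ Ω λ'ᵀ| ≤ 9m. *)
Definition C0 : R := 1 + 36 * PI ^ 2 + 1296 * PI ^ 4.

Lemma C0_pos : 0 < C0.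
Proof. unfold C0; pose proof PI_RGT_0; nra. Qed.

Lemma Rabs_coef_poly_le (y : R) :
  Rabs y <= 9 -> Rabs (1 - 4 * PI ^ 2 * y + 16 * PI ^ 4 * y ^ 2) <= C0.
Proof.
  intros Hy; unfold C0; pose proof PI_RGT_0.
  assert (0 <= PI ^ 2) by (apply pow_le; lra); assert (0 <= PI ^ 4) by (apply pow_le; lra).
  assert (y ^ 2 <= 81) by (rewrite <- pow2_abs; pose proof (Rabs_pos y); nra).
  apply Rabs_le; apply Rabs_le_between in Hy; split; nra.
Qed.

Lemma Rinv_pow2_nonneg (x : R) : 0 <= / x ^ 2.
Proof.
  destruct (Req_dec x 0) as [-> | Hx]; [rewrite pow_i, Rinv_0 by lia; lra|].
  apply Rlt_le, Rinv_0_lt_compat, pow2_gt_0, Hx.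
Qed.

Lemma Rabs_pair_coef_le (n : vec3) (m : nat) (p : zvec3 * zvec3) :
  dot3 n n = 1 -> (1 <= m)%nat -> In p (pairs m) -> Rabs (pair_coef n m p) <= C0 / INR (NN m) ^ 2.
Proof.
  intros Hn Hm Hp; destruct p as [l l']; apply in_prod_iff in Hp as [Hl Hl'].
  assert (HM : 0 < INR m) by (apply lt_0_INR; lia).
  assert (Hform : Rabs (omega_form n (l, l') / INR m) <= 9).
  { unfold Rdiv; rewrite Rabs_mult, Rabs_inv, (Rabs_pos_eq (INR m)) by lra.
    apply (Rmult_le_reg_r (INR m)); [exact HM|]; rewrite Rmult_assoc, Rinv_l by lra.
    rewrite Rmult_1_r; apply Rabs_bilin3_le; intros; [apply Rabs_Omega_le, Hn | |];
      apply zcomp_sq_le; assumption. }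
  unfold pair_coef, Rdiv; rewrite Rabs_mult, (Rabs_pos_eq (/ _)).
  - apply Rmult_le_compat_r; [apply Rinv_pow2_nonneg | apply Rabs_coef_poly_le, Hform].
  - apply Rinv_pow2_nonneg.
Qed.

Lemma GG_rsum (xi eta : vec3) (A B : R) (m : nat) :
  GG xi eta A B m
  = rsum (pairs m) (fun p => if zvec3_eqb (fst p) (snd p) then 0
                             else Cmod (plane_fourier xi eta A B (zsub3 (fst p) (snd p))) ^ 2).
Proof. reflexivity. Qed.

Lemma GG_nonneg (xi eta : vec3) (A B : R) (m : nat) : 0 <= GG xi eta A B m.
Proof.
  rewrite GG_rsum; apply rsum_nonneg; intros p _.
  destruct (zvec3_eqb _ _); [lra | apply pow2_ge_0].
Qed.

Lemma rsum_plane_fourier_le (xi eta : vec3) (A B : R) (m : nat) : 0 < A -> 0 < B ->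
  rsum (pairs m) (fun p => Cmod (plane_fourier xi eta A B (zsub3 (fst p) (snd p))) ^ 2)
  <= GG xi eta A B m + (A * B) ^ 2 * INR (NN m).
Proof.
  intros HA HB.
  assert (Hsplit : forall p : zvec3 * zvec3,
    Cmod (plane_fourier xi eta A B (zsub3 (fst p) (snd p))) ^ 2
    = (if zvec3_eqb (fst p) (snd p) then 0
       else Cmod (plane_fourier xi eta A B (zsub3 (fst p) (snd p))) ^ 2)
      + (A * B) ^ 2 * indicator (fst p) (snd p)).
  { intros [l l']; unfold indicator; simpl; destruct (zvec3_eqb l l') eqn:E; [|ring].
    apply zvec3_eqb_eq in E as <-.
    rewrite plane_fourier_expi_int, !dot3_zsub3, !Rminus_diag, !Rmult_0_r, !expi_int_0.
    rewrite Cmod_mult, !Cmod_R, !Rabs_pos_eq by lra; ring. }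
  rewrite (rsum_ext _ _ _ (fun p _ => Hsplit p)), rsum_plus, rsum_Rmult_l, <- GG_rsum.
  apply Rplus_le_compat_l, Rmult_le_compat_l; [apply pow2_ge_0 | apply rsum_pairs_diag_le].
Qed.

Lemma Cmod_IntPi2_le (n xi eta : vec3) (A B : R) (m : nat) :
  dot3 n n = 1 -> (1 <= m)%nat -> 0 < A -> 0 < B ->
  Cmod (IntPi2 n xi eta A B m)
  <= C0 / INR (NN m) ^ 2 * (GG xi eta A B m + (A * B) ^ 2 * INR (NN m)).
Proof.
  intros Hn Hm HA HB.
  pose (F := fun z => Cmod (plane_fourier xi eta A B z) ^ 2).
  rewrite IntPi2_csum; eapply Rle_trans; [apply Cmod_csum|].
  eapply Rle_trans.
  { apply (rsum_le _ _ (fun p => C0 / INR (NN m) ^ 2 * F (zsub3 (fst p) (zneg (snd p))))).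
    intros p Hp; rewrite !Cmod_mult, Cmod_R, !Rmult_assoc, Cmod_expi_int_prod.
    apply Rmult_le_compat_r; [apply pow2_ge_0 | apply Rabs_pair_coef_le; assumption]. }
  rewrite rsum_Rmult_l; apply Rmult_le_compat_l.
  { unfold Rdiv; apply Rmult_le_pos; [apply Rlt_le, C0_pos | apply Rinv_pow2_nonneg]. }
  (* Substituting λ' ↦ -λ' turns the frequencies λ + λ' into the differences of [GG]. *)
  transitivity (rsum (map (fun p => (fst p, zneg (snd p))) (pairs m))
                     (fun p => F (zsub3 (fst p) (snd p)))).
  { rewrite rsum_map; right; reflexivity. }
  rewrite (rsum_Permutation _ _ _ (Permutation_pairs_zneg m)); unfold F.
  apply rsum_plane_fourier_le; assumption.
Qed.

(* Also valid for N = 0, where [/ 0 = 0] makes both sides vanish. *)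
Lemma div_sq_split_le (c g q N : R) : 0 <= c -> 0 <= g -> 0 <= q -> 0 <= N ->
  c / N ^ 2 * (g + q * N) <= c * (1 + q) * (1 / N + g / N ^ 2).
Proof.
  intros Hc Hg Hq HN; destruct (Req_dec N 0) as [-> | HN0].
  - unfold Rdiv; rewrite pow_i, Rinv_0 by lia; lra.
  - assert (Hx : 0 <= 1 / N)
      by (unfold Rdiv; rewrite Rmult_1_l; apply Rlt_le, Rinv_0_lt_compat; lra).
    assert (Hy : 0 <= g / N ^ 2)
      by (unfold Rdiv; apply Rmult_le_pos; [exact Hg | apply Rinv_pow2_nonneg]).
    assert (Hrest : 0 <= c * (1 / N + q * (g / N ^ 2))) by (apply Rmult_le_pos; nra).
    replace (c / N ^ 2 * (g + q * N)) with (c * (q * (1 / N) + g / N ^ 2)) by (field; exact HN0).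
    replace (c * (1 + q) * (1 / N + g / N ^ 2))
      with (c * (q * (1 / N) + g / N ^ 2) + c * (1 / N + q * (g / N ^ 2))) by ring.
    lra.
Qed.

Theorem lemma4p1 (n xi eta : vec3) (A B : R) :
  orthonormal3 n xi eta -> 0 < A -> 0 < B ->
  exists (K : R) (M0 : nat), 0 < K /\
    forall m : nat, (M0 <= m)%nat -> admissible m ->
      Cmod (IntPi2 n xi eta A B m)
        <= K * (1 / INR (NN m) + GG xi eta A B m / INR (NN m) ^ 2).
Proof.
  intros [Hn _] HA HB.
  exists (C0 * (1 + (A * B) ^ 2)), 1%nat; split.
  { pose proof C0_pos; pose proof (pow2_ge_0 (A * B)); nra. }
  intros m Hm _.
  eapply Rle_trans; [apply Cmod_IntPi2_le; assumption|].
  apply div_sq_split_le;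
    [apply Rlt_le, C0_pos | apply GG_nonneg | apply pow2_ge_0 | apply pos_INR].
Qed.
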